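(* For $n\ge 1$ let $\tau$ be a recursive tree of size $n$ chosen uniformly at random, and let $X_n$ be the number of distinct shapes (Pólya trees) among the fringe subtrees of $\tau$, i.e. the size of the compacted tree of $\tau$. Then \[ \mathbb{E}(X_n) = \mathcal{O}\!\left(\frac{n}{\log n}\right) \quad \text{as } n\to\infty . \]
   Context: A recursive tree of size $n$ is a rooted non-plane (unordered) tree with $n$ nodes carrying the distinct labels $1,\dots,n$ such that labels increase along every path from the root to a leaf; there are $(n-1)!$ of them. A Pólya tree is an unlabeled rooted non-plane tree; the shape of a (labeled) tree is the Pólya tree obtained by forgetting its labels. A fringe subtree of a rooted tree is a node together with all of its descendants. The compacted tree keeps one copy of each distinct fringe-subtree shape, so its size is the number of distinct fringe-subtree shapes. *)

From Stdlib Require Import Reals.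
From mathcomp Require Import all_boot.

Set Implicit Arguments.
Unset Strict Implicit.
Unset Printing Implicit Defensive.

(* A recursive tree of size n with labels 1..n is encoded on the nodes
   'I_n (node k has label k+1) by its parent map: the root 0 is its own
   parent, and every other node k has a parent of strictly smaller label.
   This is a bijection with recursive trees of size n ((n-1)! of them). *)
Definition parent_map (n : nat) := {ffun 'I_n -> 'I_n}.

Definition is_recursive_tree (n : nat) (par : parent_map n) : bool :=
  [forall k : 'I_n, if val k == 0 then par k == k else val (par k) < val k].

Definition recursive_trees (n : nat) : {set parent_map n} :=
  [set par | is_recursive_tree par].

Definition desc (n : nat) (par : parent_map n) (u w : 'I_n) : bool :=
  connect (frel par) w u.

(* The fringe subtrees rooted at u and v have the same shape (are
   isomorphic as rooted unordered unlabeled trees): there is a bijection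
   from the descendants of u onto the descendants of v sending u to v and
   commuting with the parent map. *)
Definition same_shape (n : nat) (par : parent_map n) (u v : 'I_n) : bool :=
  [exists f : {ffun 'I_n -> 'I_n},
    [&& f u == v,
        [forall w, [forall w', (desc par u w && desc par u w' && (f w == f w'))
                                 ==> (w == w')]],
        [forall w, desc par u w ==> desc par v (f w)],
        [forall z, desc par v z ==> [exists w, desc par u w && (f w == z)]]
      & [forall w, (desc par u w && (w != u)) ==> (f (par w) == par (f w))]]].

Definition num_shapes (n : nat) (par : parent_map n) : nat :=
  #|[set [set v | same_shape par u v] | u : 'I_n]|.

Definition expected_num_shapes (n : nat) : R :=
  Rdiv (INR (\sum_(par in recursive_trees n) num_shapes par)%N)
       (INR #|recursive_trees n|).

From Stdlib Require Import Reals Lra.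
From mathcomp Require Import all_boot zify ring.

Set Implicit Arguments.
Unset Strict Implicit.
Unset Printing Implicit Defensive.

(* Fix [k].  Up to shape, a fringe subtree with at most [k] nodes is determined
   by its Dyck word, of length at most [2k], so these subtrees contribute at most
   [2^(2k+1)] shapes; every other node contributes at most one shape.  In a
   uniform recursive tree, let [S_u] be the size of the subtree at the node of
   label [u+1].  Attaching node [t+1] below a uniform one of the first [t] nodes
   multiplies [E(S_u (S_u+1))] by [(t+2)/t], hence
   [E(S_u (S_u+1)) = 2n(n+1)/((u+1)(u+2))].  Markov's inequality for [u >= M] and
   a telescoping sum give [E #{u | S_u > k} <= M + 2n(n+1)/((k+1)(k+2)(M+1))].
   Taking [k] about [log2 n / 4] and [M] about [n/k] yields [O(n / log n)]. *)

Inductive plane_tree := Node of seq plane_tree.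

Fixpoint dyck (t : plane_tree) : seq bool :=
  let: Node ts := t in true :: flatten (map dyck ts) ++ [:: false].

(* Dyck words are prefix-free, which makes the encoding of forests injective. *)
Lemma dyck_forest_cat_inj ts ts' s s' :
  flatten (map dyck ts) ++ false :: s = flatten (map dyck ts') ++ false :: s' ->
  ts = ts' /\ s = s'.
Proof.
have [N] := ubnP (size (flatten (map dyck ts))).
elim: N ts ts' s s' => // N IH [|[ts1] ts] [|[ts1'] ts'] s s' //= lt_N; try by case.
have lt_ts1 : size (flatten (map dyck ts1)) < N by move: lt_N; rewrite !size_cat; lia.
have lt_ts : size (flatten (map dyck ts)) < N by move: lt_N; rewrite !size_cat; lia.
case; rewrite -!catA /= => /(IH _ _ _ _ lt_ts1)[<-] /(IH _ _ _ _ lt_ts)[<- <-].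
by [].
Qed.

Lemma dyck_inj : injective dyck.
Proof. by move=> [ts] [ts'] [] /dyck_forest_cat_inj[->]. Qed.

Lemma size_dyck ts : size (dyck (Node ts)) = (\sum_(t <- ts) size (dyck t)).+2.
Proof. by rewrite /= size_cat size_flatten /shape sumnE !big_map addn1. Qed.

Lemma card_sum_indicator (T : finType) (P : pred T) : #|P| = \sum_x P x.
Proof.
by rewrite -sum1_card big_mkcond; apply: eq_bigr => x _; rewrite unfold_in; case: (P x).
Qed.

Lemma telescoping_sum_le (f : nat -> nat) Q M L :
  (forall u, M <= u < L -> u.+1 * u.+2 * f u <= Q) -> M.+1 * \sum_(M <= u < L) f u <= Q.
Proof.
have [lt_LM|le_ML] := ltnP L M; first by rewrite big_geq ?muln0 // ltnW.
have [d ->] : exists d, L = M + d by exists (L - M); lia.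
move=> f_le.
(* [sum_(M <= u < L) 1/((u+1)(u+2)) = (L-M)/((M+1)(L+1))], denominators cleared. *)
suff: M.+1 * (M + d).+1 * \sum_(M <= u < M + d) f u <= Q * d.
  move=> le_Qd; rewrite -(@leq_pmul2r (M + d).+1) // mulnAC (leq_trans le_Qd) //.
  by apply: leq_mul => //; lia.
elim: d f_le => [|d IH] f_le; first by rewrite addn0 big_geq ?muln0.
rewrite addnS big_nat_recr ?leq_addr //=.
set S := \sum_(M <= u < M + d) f u; set F := f (M + d).
have le_S : M.+1 * (M + d).+1 * S <= Q * d.
  by apply: IH => u range_u; apply: f_le; lia.
have le_F : (M + d).+1 * (M + d).+2 * F <= Q by apply: f_le; lia.
rewrite -(@leq_pmul2l (M + d).+1) //.
apply: (@leq_trans ((M + d).+2 * (M.+1 * (M + d).+1 * S) + M.+1 * ((M + d).+1 * (M + d).+2 * F))).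
  by apply: eq_leq; ring.
apply: (@leq_trans ((M + d).+2 * (Q * d) + M.+1 * Q)).
  by apply: leq_add; rewrite leq_mul2l ?le_S ?le_F orbT.
by apply: eq_leq; ring.
Qed.

Lemma telescoping_sum_ord_le n (f : 'I_n -> nat) Q M :
  (forall u : 'I_n, M <= u -> u.+1 * u.+2 * f u <= Q) ->
  M.+1 * \sum_(u : 'I_n | M <= u) f u <= Q.
Proof.
pose g x := if insub x is Some u then f u else 0.
have ->: \sum_(u : 'I_n | M <= u) f u = \sum_(M <= x < n) g x.
  by rewrite big_geq_mkord; apply: eq_big => [u|u _]; rewrite /g ?valK.
by move=> f_le; apply: telescoping_sum_le => x /andP[le_Mx lt_xn]; rewrite /g insubT; apply: f_le.
Qed.

Lemma expn2_quarter_le t : 2 ^ (2 * (t %/ 4)).+1 * t.+1 <= 4 * 2 ^ t.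
Proof.
set a := t %/ 4; set r := t %% 4.
have def_t : t = 4 * a + r by rewrite /a /r mulnC -divn_eq.
have lt_a : 2 * a < 2 ^ (2 * a) by apply: ltn_expl.
have lt_r : r < 2 ^ r by apply: ltn_expl.
set X := 2 ^ (2 * a) in lt_a *; set Y := 2 ^ r in lt_r.
have ->: 2 ^ t = X * X * Y by rewrite def_t /X /Y -!expnD; congr (2 ^ _); lia.
by rewrite expnS -/X def_t; nia.
Qed.

(* The leading [1] keeps words of different lengths apart. *)
Definition binary_code (s : seq bool) : nat := foldr (fun (b : bool) k => b + k.*2) 1 s.

Lemma binary_code_gt0 s : 0 < binary_code s.
Proof. by elim: s => //= b s; rewrite -addnn; lia. Qed.

Lemma binary_code_inj : injective binary_code.
Proof.
elim=> [|b s IH] [|b' s'] //=; rewrite -?addnn.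
- by have := binary_code_gt0 s'; lia.
- by have := binary_code_gt0 s; lia.
move=> eq_code; have eq_b : b = b'.
  by move/(congr1 odd): eq_code; rewrite !oddD !addbb !addbF !oddb.
by rewrite -eq_b in eq_code *; congr (_ :: _); apply: IH; move: eq_code; lia.
Qed.

Lemma binary_code_lt s : binary_code s < 2 ^ (size s).+1.
Proof. by elim: s => [|b s IH] //=; rewrite expnS -addnn; case: b => /=; lia. Qed.

Lemma card_imset_bits_le (aT rT : finType) (A : {set aT}) (g : aT -> rT)
    (f : aT -> seq bool) m :
  {in A &, forall a b, f a = f b -> g a = g b} -> {in A, forall a, size (f a) <= m} ->
  #|g @: A| <= 2 ^ m.+1.
Proof.
move=> g_f size_f; set N := (2 ^ m.+1).-1.
have ->: 2 ^ m.+1 = #|'I_N.+1| by rewrite card_ord prednK ?expn_gt0.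
pose h y : 'I_N.+1 :=
  if [pick a in A | g a == y] is Some a then inord (binary_code (f a)) else ord0.
apply: (@leq_card_in _ _ h) => _ _ /imsetP[a Aa ->] /imsetP[b Ab ->]; rewrite /h.
case: pickP => [a' /andP[Aa' /eqP <-]|/(_ a)]; last by rewrite Aa eqxx.
case: pickP => [b' /andP[Ab' /eqP <-]|/(_ b)]; last by rewrite Ab eqxx.
have lt_code c : c \in A -> binary_code (f c) < N.+1.
  move=> Ac; rewrite prednK ?expn_gt0 //; apply: leq_trans (binary_code_lt _) _.
  by rewrite leq_exp2l // ltnS size_f.
by move/(congr1 (@nat_of_ord _)); rewrite !inordK ?lt_code // => /binary_code_inj/g_f->.
Qed.

Lemma sum_ord_lt_const n (m : nat) c : m <= n -> \sum_(a : 'I_n | a < m) c = m * c.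
Proof. by move=> le_mn; rewrite (big_ord_narrow le_mn) sum_nat_const card_ord. Qed.

Lemma sum_ord_lt_const_le n (m : nat) c : \sum_(a : 'I_n | a < m) c <= m * c.
Proof.
have [le_mn|lt_nm] := leqP m n; first by rewrite sum_ord_lt_const.
rewrite (eq_bigl xpredT) => [|a]; last exact: ltn_trans (ltn_ord a) lt_nm.
by rewrite sum_nat_const card_ord leq_mul2r ltnW ?orbT.
Qed.

Lemma sum_mul_succ_shift n (d : 'I_n -> bool) s t : t <= n ->
  \sum_(a : 'I_n | a < t) d a = s ->
  \sum_(a : 'I_n | a < t) (s + d a) * (s + d a).+1 = t.+2 * (s * s.+1).
Proof.
move=> le_tn sum_d.
rewrite (eq_bigr (fun a => s * s.+1 + d a * (s.+1).*2)) => [|a _]; last first.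
  by case: (d a); rewrite /= -addnn; ring.
by rewrite big_split /= sum_ord_lt_const // -big_distrl /= sum_d -addnn; ring.
Qed.

Section FringeShapes.

Variables (n : nat) (par : parent_map n).

Lemma same_shapeP u v :
  reflect (exists f : 'I_n -> 'I_n,
            [/\ f u = v,
                forall w w', desc par u w -> desc par u w' -> f w = f w' -> w = w',
                forall w, desc par u w -> desc par v (f w),
                forall z, desc par v z -> exists2 w, desc par u w & f w = z
              & forall w, desc par u w -> w != u -> f (par w) = par (f w)])
          (same_shape par u v).
Proof.
apply: (iffP existsP) => [[f /and5P[/eqP fu /forallP f_inj f_desc f_onto f_par]]|].
  exists f; split=> //.
  - move=> w w' dw dw' eq_f.
    by apply/eqP; move/forallP/(_ w')/implyP: (f_inj w); apply; rewrite dw dw' eq_f /=.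
  - by move=> w; move/forallP/(_ w)/implyP: f_desc.
  - by move=> z /(implyP (forallP f_onto z))/existsP[w /andP[dw /eqP]]; exists w.
  - by move=> w dw neq_wu; apply/eqP; move/forallP/(_ w)/implyP: f_par; apply; rewrite dw.
case=> f [fu f_inj f_desc f_onto f_par]; exists [ffun w => f w].
apply/and5P; split; rewrite ?ffunE ?fu //.
- apply/forallP=> w; apply/forallP=> w'; apply/implyP=> /andP[/andP[dw dw']].
  by rewrite !ffunE => /eqP/f_inj->.
- by apply/forallP=> w; apply/implyP=> dw; rewrite ffunE f_desc.
- apply/forallP=> z; apply/implyP=> /f_onto[w dw fw].
  by apply/existsP; exists w; rewrite ffunE dw fw eqxx.
- by apply/forallP=> w; apply/implyP=> /andP[dw neq_wu]; rewrite !ffunE f_par.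
Qed.

Lemma desc_refl u : desc par u u.
Proof. exact: connect0. Qed.

Lemma desc_trans u v w : desc par u v -> desc par v w -> desc par u w.
Proof. by move=> duv dvw; apply: connect_trans dvw duv. Qed.

Lemma same_shape_trans u v v' :
  same_shape par u v -> same_shape par v v' -> same_shape par u v'.
Proof.
move=> /same_shapeP[f [fu f_inj f_desc f_onto f_par]].
move=> /same_shapeP[g [gv g_inj g_desc g_onto g_par]].
apply/same_shapeP; exists (g \o f); split=> /=.
- by rewrite fu gv.
- by move=> w w' dw dw' /g_inj eq_f; apply: f_inj => //; apply: eq_f; apply: f_desc.
- by move=> w dw; apply/g_desc/f_desc.
- by move=> z /g_onto[y /f_onto[w dw <-] <-]; exists w.
- move=> w dw neq_wu; rewrite f_par // g_par //; first exact: f_desc.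
  by apply: contra neq_wu => /eqP; rewrite -fu => /f_inj->; rewrite // desc_refl.
Qed.

Lemma is_recursive_treeP :
  reflect (forall w : 'I_n, if val w == 0 then par w = w else par w < w)
          (is_recursive_tree par).
Proof. by apply: (iffP forallP) => par_rec w; have := par_rec w; case: ifP => // _ /eqP. Qed.

Lemma descP u w : reflect (exists k, iter k par w = u) (desc par u w).
Proof.
apply: (iffP idP) => [duw|[k <-]]; last exact: fconnect_iter.
by exists (findex par w u); apply: iter_findex.
Qed.

Lemma desc_parent u w : w != u -> desc par u w = desc par u (par w).
Proof. by rewrite /desc fconnect_eqVf => /negbTE->. Qed.

Definition children (p : 'I_n) : seq 'I_n :=
  [seq c <- enum 'I_n | (par c == p) && (c != p)].

Lemma mem_children p c : (c \in children p) = (par c == p) && (c != p).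
Proof. by rewrite mem_filter mem_enum andbT. Qed.

Lemma uniq_children p : uniq (children p).
Proof. by rewrite filter_uniq ?enum_uniq. Qed.

Lemma desc_child p c w : c \in children p -> desc par c w -> desc par p w.
Proof.
rewrite mem_children => /andP[/eqP par_c _]; apply: desc_trans.
by apply/descP; exists 1.
Qed.

Hypothesis par_rec : is_recursive_tree par.

Lemma parent_root w : val w = 0 -> par w = w.
Proof. by move/is_recursive_treeP: par_rec => /(_ w) /[swap] ->. Qed.

Lemma parent_lt w : val w != 0 -> par w < w.
Proof. by move/is_recursive_treeP: par_rec => /(_ w) /[swap] /negbTE->. Qed.

Lemma parent_le w : par w <= w.
Proof. by have [/parent_root->|/parent_lt/ltnW] := eqVneq (val w) 0. Qed.

Lemma iter_parent_le k w : iter k par w <= w.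
Proof. by elim: k => //= k IH; apply: leq_trans (parent_le _) IH. Qed.

Lemma desc_le u w : desc par u w -> u <= w.
Proof. by move=> /descP[k <-]; apply: iter_parent_le. Qed.

Lemma desc_neq0 u w : desc par u w -> w != u -> val w != 0.
Proof.
move=> duw; apply: contraNneq => w0; apply/eqP/val_inj.
by have := desc_le duw; rewrite /= w0; lia.
Qed.

Lemma children_gt p c : c \in children p -> p < c.
Proof.
rewrite mem_children => /andP[/eqP <- neq_c]; apply: parent_lt.
by apply: contraNneq neq_c => /parent_root->.
Qed.

Lemma mem_children_parent w : val w != 0 -> w \in children (par w).
Proof.
move=> w_neq0; rewrite mem_children eqxx /=.
by apply: contraTneq (parent_lt w_neq0) => <-; rewrite ltnn.
Qed.

(* Children are listed by increasing label.  Equal plane shapes give equal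
   Polya shapes (the converse fails, which is harmless for an upper bound). *)
Fixpoint plane_shape_rec (fuel : nat) (u : 'I_n) : plane_tree :=
  if fuel is fuel'.+1 then Node (map (plane_shape_rec fuel') (children u))
  else Node [::].

Definition plane_shape (u : 'I_n) : plane_tree := plane_shape_rec (n - u) u.

Lemma plane_shape_rec_stable fuel fuel' (u : 'I_n) :
  n - u <= fuel -> n - u <= fuel' -> plane_shape_rec fuel u = plane_shape_rec fuel' u.
Proof.
elim: fuel fuel' u => [|fuel IH] [|fuel'] u le_fuel le_fuel' //=;
  have := ltn_ord u; try lia.
move=> _; congr Node; apply/eq_in_map => c /children_gt lt_uc.
by apply: IH; have := ltn_ord c; lia.
Qed.

Lemma plane_shapeE u : plane_shape u = Node (map plane_shape (children u)).
Proof.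
rewrite /plane_shape; have -> : n - u = (n - u).-1.+1 by have := ltn_ord u; lia.
congr Node; apply/eq_in_map => c /children_gt lt_uc.
by apply: plane_shape_rec_stable; have := ltn_ord c; lia.
Qed.

Lemma eq_plane_shape_children p q : plane_shape p = plane_shape q ->
  map plane_shape (children p) = map plane_shape (children q).
Proof. by rewrite !plane_shapeE => -[]. Qed.

Fixpoint transfer_rec (u v : 'I_n) (fuel : nat) (w : 'I_n) : 'I_n :=
  if fuel is fuel'.+1 then
    if (w == u) || (val w == 0) then v
    else nth v (children (transfer_rec u v fuel' (par w))) (index w (children (par w)))
  else v.

(* Sends the [i]-th child of a node to the [i]-th child of its image; this is
   an isomorphism of fringe subtrees when [plane_shape u = plane_shape v]. *)
Definition transfer (u v w : 'I_n) : 'I_n := transfer_rec u v w.+1 w.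

Lemma transfer_rec_stable u v fuel fuel' (w : 'I_n) :
  w < fuel -> w < fuel' -> transfer_rec u v fuel w = transfer_rec u v fuel' w.
Proof.
elim: fuel fuel' w => [|fuel IH] [|fuel'] w //= lt_w lt_w'.
case: ifP => // /norP[_ /parent_lt lt_pw].
by rewrite (IH fuel') //; lia.
Qed.

Lemma transfer_root u v : transfer u v u = v.
Proof. by rewrite /transfer /= eqxx. Qed.

Lemma transferE u v w : w != u -> val w != 0 ->
  transfer u v w = nth v (children (transfer u v (par w))) (index w (children (par w))).
Proof.
move=> neq_wu w_neq0; rewrite /transfer /= (negbTE neq_wu) (negbTE w_neq0) /=.
by rewrite (@transfer_rec_stable _ _ w (par w).+1) //; have := parent_lt w_neq0; lia.
Qed.

Section Transfer.

Variables u v : 'I_n.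
Hypothesis shape_uv : plane_shape u = plane_shape v.

Lemma transfer_spec w : desc par u w ->
  [/\ plane_shape (transfer u v w) = plane_shape w, desc par v (transfer u v w)
    & w != u -> transfer u v w \in children (transfer u v (par w))].
Proof.
have [m] := ubnP (val w); elim: m w => // m IH w /ltnSE le_wm duw.
have [->|neq_wu] := eqVneq w u; first by rewrite transfer_root shape_uv desc_refl.
have w_neq0 := desc_neq0 duw neq_wu.
have dup : desc par u (par w) by rewrite -desc_parent.
have [shape_q dvq _] := IH (par w) (leq_trans (parent_lt w_neq0) le_wm) dup.
set p := par w in dup shape_q dvq *; set q := transfer u v p in shape_q dvq *.
have w_p : w \in children p := mem_children_parent w_neq0.
have eq_shapes := eq_plane_shape_children shape_q.
have lt_i : index w (children p) < size (children q).
  by rewrite -(size_map plane_shape) eq_shapes size_map index_mem.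
have q_tw : transfer u v w \in children q by rewrite transferE // mem_nth.
split=> [||_ //]; last exact: desc_trans dvq (desc_child q_tw (desc_refl _)).
rewrite transferE // -(nth_map v (plane_shape v)) // eq_shapes.
by rewrite (nth_map w) ?nth_index ?index_mem.
Qed.

Lemma transferK w : desc par u w -> transfer v u (transfer u v w) = w.
Proof.
have [m] := ubnP (val w); elim: m w => // m IH w /ltnSE le_wm duw.
have [->|neq_wu] := eqVneq w u; first by rewrite !transfer_root.
have w_neq0 := desc_neq0 duw neq_wu.
have dup : desc par u (par w) by rewrite -desc_parent.
have [shape_q dvq _] := transfer_spec dup.
have [_ _ /(_ neq_wu) q_tw] := transfer_spec duw.
have lt_i : index w (children (par w)) < size (children (transfer u v (par w))).
  by rewrite -(size_map plane_shape) (eq_plane_shape_children shape_q) size_map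
             index_mem mem_children_parent.
have lt_qz := children_gt q_tw; have le_vq := desc_le dvq.
have z_neq_v : transfer u v w != v by apply: contraTneq lt_qz => ->; rewrite -leqNgt.
have z_neq0 : val (transfer u v w) != 0.
  by rewrite -lt0n; apply: leq_ltn_trans lt_qz.
move: q_tw; rewrite mem_children => /andP[/eqP par_z _].
rewrite transferE // par_z IH ?(leq_trans (parent_lt w_neq0)) //.
by rewrite transferE // index_uniq ?uniq_children // nth_index ?mem_children_parent.
Qed.

End Transfer.

Lemma same_plane_shape u v : plane_shape u = plane_shape v -> same_shape par u v.
Proof.
move=> shape_uv; apply/same_shapeP; exists (transfer u v); split.
- exact: transfer_root.
- by move=> w w' duw duw' /(congr1 (transfer v u)); rewrite !transferK.
- by move=> w /(transfer_spec shape_uv)[].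
- move=> z dvz; exists (transfer v u z); last exact: transferK.
  by have [] := transfer_spec (esym shape_uv) dvz.
- move=> w duw neq_wu; have [_ _ /(_ neq_wu)] := transfer_spec shape_uv duw.
  by rewrite mem_children => /andP[/eqP].
Qed.

Lemma desc_children u w :
  desc par u w = (w == u) + \sum_(c <- children u) desc par c w :> nat.
Proof.
have not_desc_u c : c \in children u -> desc par c u = false.
  by move=> /children_gt lt_uc; apply: contraTF lt_uc => /desc_le; rewrite -leqNgt.
have [m] := ubnP (val w); elim: m w => // m IH w /ltnSE le_wm.
have [->|neq_wu] := eqVneq w u.
  by rewrite desc_refl big1_seq // => c /andP[_ /not_desc_u->].
rewrite add0n.
have [w0|w_neq0] := eqVneq (val w) 0.
  have not_desc_w v : w != v -> desc par v w = false.
    by move=> neq_wv; apply/negbTE/negP => /desc_neq0/(_ neq_wv); rewrite w0.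
  rewrite not_desc_w // big1_seq // => c /andP[_ /children_gt lt_uc].
  by rewrite not_desc_w //; apply: contraTneq lt_uc => <-; rewrite w0.
rewrite desc_parent // IH ?(leq_trans (parent_lt w_neq0)) //.
have [par_w|neq_pu] := eqVneq (par w) u.
  have u_w : w \in children u by rewrite -par_w mem_children_parent.
  rewrite par_w big1_seq => [|c /andP[_ /not_desc_u->] //].
  rewrite (big_rem w) //= desc_refl big1_seq // => c /andP[_].
  rewrite mem_rem_uniq ?uniq_children // inE => /andP[neq_cw u_c].
  by rewrite desc_parent 1?eq_sym // par_w not_desc_u.
apply: eq_big_seq => c u_c; rewrite -desc_parent //.
by apply: contraNneq neq_pu => ->; move: u_c; rewrite mem_children => /andP[].
Qed.

Definition subtree_size (u : 'I_n) : nat := #|desc par u|.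

Lemma subtree_sizeE u :
  subtree_size u = (\sum_(c <- children u) subtree_size c).+1.
Proof.
rewrite /subtree_size card_sum_indicator (eq_bigr _ (fun w _ => desc_children u w)).
rewrite big_split /=.
rewrite (bigD1 u) //= eqxx big1 => [|w /negbTE-> //].
rewrite exchange_big /= add1n; congr _.+1; apply: eq_bigr => c _.
by rewrite card_sum_indicator.
Qed.

Lemma size_dyck_plane_shape u : size (dyck (plane_shape u)) = (subtree_size u).*2.
Proof.
have [m] := ubnP (n - u); elim: m u => // m IH u /ltnSE le_um.
rewrite plane_shapeE size_dyck big_map subtree_sizeE doubleS -mul2n big_distrr /=.
congr _.+2; apply: eq_big_seq => c /children_gt lt_uc; rewrite mul2n IH //.
by have := ltn_ord c; lia.
Qed.

Lemma num_shapes_le k :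
  num_shapes par <= 2 ^ (2 * k).+1 + #|[set u | k < subtree_size u]|.
Proof.
set small := [set u | subtree_size u <= k].
set shape_class := fun u => [set v | same_shape par u v].
have ->: num_shapes par = #|shape_class @: (small :|: ~: small)|.
  by rewrite setUCr; apply: eq_card => X; apply/imsetP/imsetP => -[u _ ->]; exists u.
rewrite imsetU; apply: leq_trans (leq_card_setU _ _).1 _; apply: leq_add.
  apply: (@card_imset_bits_le _ _ _ _ (dyck \o plane_shape)) => [u v _ _ /dyck_inj eq_uv|u].
    apply/setP=> w; rewrite !inE; apply/idP/idP; apply: same_shape_trans;
    exact: same_plane_shape.
  by rewrite inE /= size_dyck_plane_shape -mul2n leq_mul2l.
apply: leq_trans (leq_imset_card _ _) _; apply: subset_leq_card.
by apply/subsetP => u; rewrite !inE -ltnNge.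
Qed.

End FringeShapes.

Section UniformRecursiveTree.

Variable n : nat.

Local Notation RT := (recursive_trees n).

Lemma recursive_tree_parent_lt q (i : 'I_n) : q \in RT -> 0 < i -> q i < i.
Proof. by rewrite inE => q_rec /lt0n_neq0; apply: parent_lt. Qed.

Definition reparent (q : parent_map n) (i a : 'I_n) : parent_map n :=
  [ffun x => if x == i then a else q x].

Lemma reparent_at q i a : reparent q i a i = a.
Proof. by rewrite ffunE eqxx. Qed.

Lemma reparent_id q i : reparent q i (q i) = q.
Proof. by apply/ffunP => x; rewrite ffunE; case: eqP => // ->. Qed.

Lemma reparent_reparent q i a b : reparent (reparent q i a) i b = reparent q i b.
Proof. by apply/ffunP => x; rewrite !ffunE; case: eqP. Qed.

Lemma reparent_recursive q (i a b : 'I_n) : 0 < i -> a < i -> b < i ->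
  (reparent q i a \in RT) = (reparent q i b \in RT).
Proof.
move=> i_gt0 lt_ai lt_bi; rewrite !inE.
apply/is_recursive_treeP/is_recursive_treeP => q_rec x; have := q_rec x; rewrite !ffunE;
  by case: (eqVneq x i) => [->|//]; rewrite (negbTE (lt0n_neq0 i_gt0)).
Qed.

Lemma sum_reparent_parent F (i a b : 'I_n) : 0 < i -> a < i -> b < i ->
  \sum_(q in RT | q i == b) F (reparent q i a) = \sum_(q in RT | q i == a) F q.
Proof.
move=> i_gt0 lt_ai lt_bi; symmetry.
rewrite (reindex_onto (fun q => reparent q i a) (fun q => reparent q i b)) /=; last first.
  by move=> q /andP[_ /eqP <-]; rewrite reparent_reparent reparent_id.
apply: eq_bigl => q; rewrite reparent_at eqxx andbT reparent_reparent.
apply/andP/andP => [[q_rec /eqP <-]|[q_rec /eqP <-]].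
  by rewrite reparent_at -(reparent_recursive _ i_gt0 lt_ai lt_bi).
split; last by rewrite reparent_id.
have lt_qi := recursive_tree_parent_lt q_rec i_gt0.
by rewrite (reparent_recursive _ i_gt0 lt_ai lt_qi) reparent_id.
Qed.

Lemma sum_recursive_trees_by_parent F (i : 'I_n) : 0 < i ->
  \sum_(q in RT) F q = \sum_(b : 'I_n | b < i) \sum_(q in RT | q i == b) F q.
Proof. by move=> i_gt0; apply: partition_big => q /recursive_tree_parent_lt; apply. Qed.

(* In a recursive tree the parent of node [i > 0] ranges independently
   over the [i] smaller nodes. *)
Lemma sum_reparent F (i : 'I_n) : 0 < i ->
  \sum_(q in RT) \sum_(a : 'I_n | a < i) F (reparent q i a) = i * \sum_(q in RT) F q.
Proof.
move=> i_gt0; rewrite exchange_big (sum_recursive_trees_by_parent _ i_gt0) big_distrr.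
apply: eq_bigr => a lt_ai; rewrite (sum_recursive_trees_by_parent _ i_gt0).
transitivity (\sum_(b : 'I_n | b < i) \sum_(q in RT | q i == a) F q).
  by apply: eq_bigr => b lt_bi; apply: sum_reparent_parent.
by rewrite sum_ord_lt_const // ltnW.
Qed.

Definition subtree_size_below (q : parent_map n) (u : 'I_n) (t : nat) : nat :=
  \sum_(w : 'I_n | w < t) desc q u w.

Lemma subtree_size_below_n q u : subtree_size_below q u n = subtree_size q u.
Proof.
rewrite /subtree_size card_sum_indicator /subtree_size_below.
by apply: eq_bigl => w; rewrite ltn_ord.
Qed.

Lemma desc_reparent_below q (i a u w : 'I_n) :
  q \in RT -> w < i -> desc (reparent q i a) u w = desc q u w.
Proof.
rewrite inE => q_rec lt_wi.
have iter_eq k : iter k (reparent q i a) w = iter k q w.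
  elim: k => //= k ->; rewrite ffunE ifN_eq // neq_ltn.
  by rewrite (leq_ltn_trans (iter_parent_le q_rec k w) lt_wi).
by apply/descP/descP => -[k]; exists k; rewrite ?iter_eq // -iter_eq.
Qed.

Lemma subtree_size_below_reparent q (i u a : 'I_n) : q \in RT -> u < i -> a < i ->
  subtree_size_below (reparent q i a) u i.+1 = subtree_size_below q u i + desc q u a.
Proof.
move=> q_rec lt_ui lt_ai; rewrite /subtree_size_below (bigD1 i) //= addnC.
congr (_ + _).
  have lt_iS (w : 'I_n) : (w < i.+1) && (w != i) = (w < i).
    by rewrite ltnS -val_eqE andbC -ltn_neqAle.
  by apply: eq_big => [w|w]; rewrite lt_iS // => /desc_reparent_below->.
have neq_iu : i != u by rewrite neq_ltn lt_ui orbT.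
by rewrite desc_parent // reparent_at desc_reparent_below.
Qed.

Lemma sum_subtree_size_below_step (u : 'I_n) t (lt_tn : t < n) : u < t ->
  t * \sum_(q in RT) (subtree_size_below q u t.+1 * (subtree_size_below q u t.+1).+1) =
  t.+2 * \sum_(q in RT) (subtree_size_below q u t * (subtree_size_below q u t).+1).
Proof.
move=> lt_ut; pose i := Ordinal lt_tn.
rewrite -[t in LHS]/(nat_of_ord i).
pose F q := subtree_size_below q u i.+1 * (subtree_size_below q u i.+1).+1.
rewrite -(sum_reparent F); last exact: leq_ltn_trans lt_ut.
rewrite big_distrr; apply: eq_bigr => q q_rec; rewrite /F.
under eq_bigr => a lt_ai do rewrite (subtree_size_below_reparent q_rec (lt_ut : u < i) lt_ai).
exact: sum_mul_succ_shift (ltnW lt_tn) _.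
Qed.

Lemma sum_subtree_size_below (u : 'I_n) t : u < t <= n ->
  u.+1 * u.+2 * \sum_(q in RT) (subtree_size_below q u t * (subtree_size_below q u t).+1)
  = 2 * #|RT| * t * t.+1.
Proof.
elim: t => [|t IH] /andP[lt_ut le_tn] //.
have [eq_ut|neq_ut] := eqVneq (u : nat) t.
  rewrite -eq_ut (eq_bigr (fun=> 2)) => [|q]; first by rewrite sum_nat_const; ring.
  rewrite inE => q_rec; suff -> : subtree_size_below q u u.+1 = 1 by [].
  rewrite /subtree_size_below (bigD1 u) //= desc_refl big1 // => w /andP[le_wu neq_wu].
  apply/eqP; rewrite eqb0; apply: contra neq_wu => /(desc_le q_rec) le_uw.
  by apply/eqP/val_inj/eqP; rewrite eqn_leq le_uw -ltnS le_wu.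
have lt_ut' : u < t by rewrite ltn_neqAle neq_ut -ltnS lt_ut.
have t_gt0 : 0 < t by apply: leq_ltn_trans lt_ut'.
apply/eqP; rewrite -(eqn_pmul2l t_gt0) mulnCA sum_subtree_size_below_step //.
rewrite mulnCA IH; first by apply/eqP; ring.
by rewrite lt_ut' ltnW.
Qed.

Lemma sum_subtree_size_sq (u : 'I_n) :
  u.+1 * u.+2 * \sum_(q in RT) (subtree_size q u * (subtree_size q u).+1)
  = 2 * #|RT| * n * n.+1.
Proof.
rewrite -(@sum_subtree_size_below u n); last by rewrite ltn_ord leqnn.
by congr (_ * _); apply: eq_bigr => q _; rewrite subtree_size_below_n.
Qed.

Lemma sum_card_large_subtrees k M :
  k.+1 * k.+2 * M.+1 * \sum_(q in RT) #|[set u | k < subtree_size q u]|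
  <= k.+1 * k.+2 * M.+1 * (M * #|RT|) + 2 * #|RT| * n * n.+1.
Proof.
rewrite (eq_bigr (fun q => \sum_(u : 'I_n) (k < subtree_size q u))) => [|q _]; last first.
  by rewrite -sum1dep_card big_mkcond; apply: eq_bigr => u _; case: ltnP.
rewrite exchange_big (bigID (fun u : 'I_n => u < M)) /= mulnDr.
apply: leq_add.
  rewrite leq_mul2l; apply/orP; right; apply: leq_trans (sum_ord_lt_const_le n M #|RT|).
  apply: leq_sum => u _; rewrite -sum1_card; apply: leq_sum => q _.
  by case: (_ < _).
rewrite (eq_bigl (fun u : 'I_n => M <= u)) => [|u]; last by rewrite -leqNgt.
set A := fun u => \sum_(q in RT) subtree_size q u * (subtree_size q u).+1.
apply: (@leq_trans (M.+1 * \sum_(u : 'I_n | M <= u) A u)); last first.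
  by apply: telescoping_sum_ord_le => u _; rewrite sum_subtree_size_sq.
rewrite [k.+1 * _ * _]mulnC -mulnA leq_mul2l big_distrr /=.
apply: leq_sum => u _; rewrite big_distrr; apply: leq_sum => q _.
by case: ltnP => [lt_kS|_]; rewrite /= ?muln0 // muln1 leq_mul.
Qed.

Lemma sum_num_shapes_le k M :
  k.+1 * k.+2 * M.+1 * \sum_(q in RT) num_shapes q
  <= k.+1 * k.+2 * M.+1 * (2 ^ (2 * k).+1 + M) * #|RT| + 2 * #|RT| * n * n.+1.
Proof.
set P := k.+1 * k.+2 * M.+1.
set B := \sum_(q in RT) #|[set u | k < subtree_size q u]|.
have le_shapes : \sum_(q in RT) num_shapes q <= 2 ^ (2 * k).+1 * #|RT| + B.
  apply: (@leq_trans (\sum_(q in RT) (2 ^ (2 * k).+1 + #|[set u | k < subtree_size q u]|))).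
    by apply: leq_sum => q; rewrite inE => q_rec; apply: num_shapes_le.
  by rewrite big_split sum_nat_const mulnC.
apply: leq_trans (leq_mul (leqnn P) le_shapes) _.
rewrite mulnDr (_ : P * (_ + M) * #|RT| = P * (2 ^ (2 * k).+1 * #|RT|) + P * (M * #|RT|));
  last by ring.
by rewrite -addnA leq_add2l; apply: sum_card_large_subtrees.
Qed.

Lemma sum_num_shapes_log_le : 0 < n ->
  (\sum_(q in RT) num_shapes q) * (trunc_log 2 n).+1 <= 16 * n * #|RT|.
Proof.
move=> n_gt0; set t := trunc_log 2 n; set k := t %/ 4; set M := n %/ k.+1.
set P := k.+1 * k.+2 * M.+1.
have le_2k : 2 ^ (2 * k).+1 * t.+1 <= 4 * n.
  by apply: leq_trans (expn2_quarter_le t) _; rewrite leq_mul2l trunc_logP.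
have le_t : t.+1 <= 4 * k.+1.
  by rewrite /k; have := divn_eq t 4; have := ltn_pmod t (isT : 0 < 4); lia.
have le_Mt : M * t.+1 <= 4 * n.
  apply: (@leq_trans (M * (4 * k.+1))); first by rewrite leq_mul2l le_t orbT.
  by rewrite mulnCA leq_mul2l leq_divM orbT.
have le_nt : n.+1 * t.+1 <= 4 * P.
  apply: (@leq_trans (M.+1 * k.+1 * (4 * k.+2))); last by apply: eq_leq; rewrite /P; ring.
  by apply: leq_mul; [apply: ltn_ceil | lia].
set R := #|RT|.
rewrite -(@leq_pmul2l P) ?muln_gt0 // mulnA.
apply: leq_trans (leq_mul (sum_num_shapes_le k M) (leqnn t.+1)) _; rewrite -/P -/R.
rewrite (_ : (P * _ * R + _) * t.+1 = P * R * (2 ^ (2 * k).+1 * t.+1) + P * R * (M * t.+1)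
                                    + 2 * R * n * (n.+1 * t.+1)); last by ring.
apply: leq_trans (leq_add (leq_add (leq_mul (leqnn _) le_2k) (leq_mul (leqnn _) le_Mt))
                          (leq_mul (leqnn _) le_nt)) _.
by apply: eq_leq; ring.
Qed.

Lemma recursive_trees_card_gt0 : 0 < n -> 0 < #|RT|.
Proof.
move=> n_gt0; apply/card_gt0P; exists [ffun=> Ordinal n_gt0].
rewrite inE; apply/is_recursive_treeP => w; rewrite ffunE.
case: eqP => [w0|/eqP w_neq0]; last by rewrite lt0n.
by apply: val_inj; rewrite /= w0.
Qed.

End UniformRecursiveTree.

Section RealBounds.

Local Open Scope R_scope.

Lemma INR_expn2 t : INR (2 ^ t)%N = 2 ^ t.
Proof. by elim: t => // t IH; rewrite expnS -multE mult_INR IH. Qed.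

Lemma ln_le_of_lt_expn2 (n t : nat) : (0 < n)%N -> (n < 2 ^ t)%N -> ln (INR n) <= INR t.
Proof.
move=> /ltP/lt_0_INR n_gt0 /ltP/lt_INR; rewrite INR_expn2 => lt_n.
have ln2_lt1 : ln 2 < 1.
  rewrite -{1}(ln_exp 1); apply: ln_increasing; first lra.
  by have := exp_ineq1 1 ltac:(lra); lra.
have := ln_increasing _ _ n_gt0 lt_n; rewrite ln_pow; last lra.
by have := pos_INR t; nra.
Qed.

Lemma ratio_le_div_ln (S Rn n t : nat) : (0 < Rn)%N -> (2 <= n)%N -> (n < 2 ^ t)%N ->
  (S * t <= 16 * n * Rn)%N -> INR S / INR Rn <= 16 * (INR n / ln (INR n)).
Proof.
move=> /ltP/lt_0_INR Rn_gt0 le_2n lt_n /leP/le_INR.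
rewrite -!multE !mult_INR (_ : INR 16 = 16); last by rewrite /=; lra.
move=> le_St.
have n_ge2 : 2 <= INR n by have := le_INR 2 n (elimT leP le_2n); rewrite /=; lra.
have ln_gt0 : 0 < ln (INR n) by rewrite -ln_1; apply: ln_increasing; lra.
have := ln_le_of_lt_expn2 (ltn_trans (isT : (0 < 1)%N) le_2n) lt_n => le_ln.
apply: (Rle_trans _ (16 * INR n / INR t)).
  apply: (Rmult_le_reg_r (INR Rn * INR t)); first by apply: Rmult_lt_0_compat; lra.
  by field_simplify; lra.
rewrite /Rdiv -Rmult_assoc; apply: Rmult_le_compat_l; first lra.
by apply: Rinv_le_contravar.
Qed.

End RealBounds.

Theorem theorem2p8 :
  exists (C : R) (N : nat), forall n : nat, (N <= n)%N ->
    Rle (expected_num_shapes n) (Rmult C (Rdiv (INR n) (ln (INR n)))).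
Proof.
exists (IZR 16), 2 => n le_2n; have n_gt0 : (0 < n)%N by apply: ltn_trans le_2n.
apply: (@ratio_le_div_ln _ _ _ (trunc_log 2 n).+1) => //.
- exact: recursive_trees_card_gt0.
- exact: trunc_log_ltn.
- exact: sum_num_shapes_log_le.
Qed.
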